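(* For all integers $0\le t\le n$, there exists a monotone, acyclic $2$-CNF formula $F$ on $n$ variables that is $t$-admissible and satisfies $|\mathrm{sat}_t(F)|=S(n,t,2)$. In particular $S^+(n,t,2)=S(n,t,2)$.
   Context: A $2$-CNF formula over $x_1,\dots,x_n$ is a conjunction of clauses each containing at most two literals; it is monotone if no literal is negated. The implication graph $G(F)$ is the directed graph on the $2n$ literals which, for each clause $X\lor Y$, contains edges $\neg X\to Y$ and $\neg Y\to X$; $F$ is acyclic if $G(F)$ has no directed cycle. $\mathrm{sat}_t(F)$ is the set of satisfying assignments of Hamming weight exactly $t$; $F$ is $t$-admissible if it has no satisfying assignment of Hamming weight less than $t$. $S(n,t,k)$ (resp. $S^+(n,t,k)$) is the maximum of $|\mathrm{sat}_t(F)|$ over $t$-admissible $k$-CNF (resp. monotone $k$-CNF) formulas $F$ on $n$ variables. *)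

From mathcomp Require Import all_boot.
Set Implicit Arguments. Unset Strict Implicit. Unset Printing Implicit Defensive.

(* A literal over x_1..x_n: (i, true) is x_i, (i, false) is ~ x_i. *)
Definition lit (n : nat) : finType := ('I_n * bool)%type.
Definition lneg n (l : lit n) : lit n := (l.1, ~~ l.2).

(* A clause is a finite set of literals (a disjunction);
   a CNF formula is a finite set of clauses (a conjunction). *)
Definition clause n := {set lit n}.
Definition cnf n := {set clause n}.

Definition is_kcnf n (k : nat) (F : cnf n) : bool :=
  [forall C in F, #|C| <= k].

Definition monotone n (F : cnf n) : bool :=
  [forall C in F, forall l in C, l.2].

Definition assignment n := {ffun 'I_n -> bool}.
Definition weight n (a : assignment n) : nat := #|[set i | a i]|.

Definition lit_val n (a : assignment n) (l : lit n) : bool := a l.1 == l.2.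
Definition clause_sat n (a : assignment n) (C : clause n) : bool :=
  [exists l in C, lit_val a l].
Definition satisfies n (a : assignment n) (F : cnf n) : bool :=
  [forall C in F, clause_sat a C].

Definition sat_t n (t : nat) (F : cnf n) : {set assignment n} :=
  [set a | satisfies a F && (weight a == t)].

Definition admissible n (t : nat) (F : cnf n) : bool :=
  [forall a : assignment n, satisfies a F ==> (t <= weight a)].

(* Implication graph G(F): for each clause X \/ Y, edges ~X -> Y and ~Y -> X.
   A unit clause {X} is read as X \/ X, giving the edge ~X -> X. *)
Definition impl_edge n (F : cnf n) : rel (lit n) :=
  fun u v => [exists C in F, exists X in C, exists Y in C,
    [&& u == lneg X, v == Y & (X != Y) || (#|C| == 1)]].

Definition acyclic n (F : cnf n) : bool :=
  ~~ [exists u, exists v, impl_edge F u v && connect (impl_edge F) v u].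

Definition S (n t k : nat) : nat :=
  \max_(F : cnf n | is_kcnf k F && admissible t F) #|sat_t t F|.
Definition Splus (n t k : nat) : nat :=
  \max_(F : cnf n | [&& is_kcnf k F, monotone F & admissible t F]) #|sat_t t F|.

(* Close F off to the monotone 2-CNF of all clauses x_i \/ x_j (i = j allowed)
   satisfied by every weight-t solution of F.  It keeps these solutions, and
   being monotone it is acyclic: every edge of its implication graph goes from
   a negative to a positive literal.  It is still t-admissible: if s solves it
   and has weight < t, then for any two zeros i, j of s some weight-t solution
   of F vanishes at both (otherwise x_i \/ x_j would be a clause).  Solution
   sets of 2-CNFs are closed under the coordinatewise majority of three
   points, which turns these pairwise witnesses into a single solution of F
   vanishing on all zeros of s, of weight < t. *)
From mathcomp Require Import all_boot.
Set Implicit Arguments. Unset Strict Implicit.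

Definition maj3 (x y z : bool) := [|| x && y, x && z | y && z].

Lemma maj3_eq (v x y z : bool) :
  [|| (x == v) && (y == v), (x == v) && (z == v) | (y == v) && (z == v)] ->
  maj3 x y z = v.
Proof. by case: v x y z => [] [] [] []. Qed.

Definition median n (a b c : assignment n) : assignment n :=
  [ffun i => maj3 (a i) (b i) (c i)].

Lemma lit_val_median n (a b c : assignment n) (l : lit n) :
  [|| lit_val a l && lit_val b l, lit_val a l && lit_val c l
    | lit_val b l && lit_val c l] -> lit_val (median a b c) l.
Proof. by move=> two; rewrite /lit_val ffunE; apply/eqP/maj3_eq. Qed.

Lemma two_of_three_in_pair (T : finType) (C : {set T}) (x y z : T) :
  #|C| <= 2 -> x \in C -> y \in C -> z \in C -> [|| x == y, x == z | y == z].
Proof.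
move=> C2 xC yC zC; apply/negPn/negP; rewrite !negb_or => /and3P [xy xz yz].
have : #|[set x; y; z]| <= #|C|.
  apply/subset_leq_card/subsetP => w.
  by rewrite !inE => /orP [/orP [] | ] /eqP ->.
rewrite setUC cardsU1 cards2 !inE ![z == _]eq_sym (negbTE xz) (negbTE yz) xy.
by move/leq_trans/(_ C2).
Qed.

Lemma satisfies_median n (F : cnf n) (a b c : assignment n) : is_kcnf 2 F ->
  satisfies a F -> satisfies b F -> satisfies c F -> satisfies (median a b c) F.
Proof.
move=> /forallP F2 /forallP Fa /forallP Fb /forallP Fc.
apply/forallP => C; apply/implyP => CF.
have := F2 C; have := Fa C; have := Fb C; have := Fc C; rewrite CF /=.
move=> /existsP [lc /andP [lcC vc]] /existsP [lb /andP [lbC vb]].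
move=> /existsP [la /andP [laC va]] C2.
have sat_at l :
    l \in C -> lit_val (median a b c) l -> clause_sat (median a b c) C.
  by move=> lC vl; apply/existsP; exists l; rewrite lC.
case/or3P: (two_of_three_in_pair C2 laC lbC lcC) => /eqP e.
- by apply: (sat_at la) => //; apply: lit_val_median; rewrite va e vb.
- by apply: (sat_at la) => //; apply: lit_val_median; rewrite va e vc orbT.
- by apply: (sat_at lb) => //; apply: lit_val_median; rewrite vb e vc !orbT.
Qed.

Section MedianHelly.

Variables (n : nat) (P : pred (assignment n)).
Hypothesis P_median : forall a b c, P a -> P b -> P c -> P (median a b c).

Lemma median_common_zero (K : {set 'I_n}) :
  (forall i j, i \in K -> j \in K -> exists2 a, P a & ~~ a i && ~~ a j) ->
  K != set0 -> exists2 b, P b & {in K, forall i, ~~ b i}.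
Proof.
have [m] := ubnP #|K|; elim: m K => // m IH K szK pairK.
case/set0Pn => i1 i1K.
case: (boolP [exists i2, (i2 \in K) && (i2 != i1)]) => [|single]; last first.
  have [a Pa /andP [a1 _]] := pairK i1 i1 i1K i1K.
  exists a => // x xK; have [-> // | x1] := eqVneq x i1.
  by move/existsPn: single => /(_ x); rewrite xK x1.
case/existsP => i2 /andP [i2K i21].
have drop i j : i \in K -> j \in K -> j != i ->
    exists2 b, P b & {in K :\ i, forall k, ~~ b k}.
  move=> iK jK ji; apply: IH.
  - by rewrite (cardsD1 i K) iK add1n ltnS in szK.
  - by move=> k l /setD1P [_ kK] /setD1P [_ lK]; apply: pairK.
  - by apply/set0Pn; exists j; rewrite in_setD1 ji.
have i12 : i1 != i2 by rewrite eq_sym.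
have [a Pa a0] := drop i1 i2 i1K i2K i21.
have [b Pb b0] := drop i2 i1 i2K i1K i12.
have [c Pc /andP [c1 c2]] := pairK i1 i2 i1K i2K.
exists (median a b c) => [|x xK]; first exact: P_median.
rewrite ffunE; apply/negbT/maj3_eq; rewrite !eqbF_neg.
have [-> | x1] := eqVneq x i1; first by rewrite b0 ?c1 ?orbT // !inE i12.
have [-> | x2] := eqVneq x i2; first by rewrite a0 ?c2 ?orbT // !inE i21.
by rewrite a0 ?b0 // !inE ?x1 ?x2.
Qed.

End MedianHelly.

Lemma monotone_acyclic n (F : cnf n) : monotone F -> acyclic F.
Proof.
move=> /forallP monoF.
have edge_sign u v : impl_edge F u v -> (u.2 = false) * (v.2 = true).
  case/existsP => C /andP [CF /existsP [X /andP [XC /existsP [Y /andP [YC]]]]].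
  have /forallP posC := implyP (monoF C) CF.
  case/and3P => /eqP -> /eqP -> _.
  by rewrite /= (implyP (posC X)) ?(implyP (posC Y)).
apply/existsP => -[u /existsP [v /andP [/edge_sign [u2 v2] /connectP]]].
move=> [p vp up].
case: p vp up => [_ /= uv | w p /= /andP [/edge_sign [v2' _] _] _].
  by move: u2; rewrite uv v2.
by move: v2'; rewrite v2.
Qed.

Lemma weight_le_zeros n (a b : assignment n) :
  {in [set i | ~~ a i], forall i, ~~ b i} -> weight b <= weight a.
Proof.
move=> b0; apply/subset_leq_card/subsetP => i; rewrite !inE => bi.
by apply/negPn/negP => ai; move: (b0 i); rewrite inE ai bi => /(_ isT).
Qed.

Lemma weight_full n (a : assignment n) :
  [set i | ~~ a i] = set0 -> weight a = n.
Proof.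
move=> no0; rewrite /weight -[RHS]card_ord; apply: eq_card => i.
rewrite !inE; apply/negPn/negP => ai.
by have := in_set0 i; rewrite -no0 inE ai.
Qed.

Section MonotoneClosure.

Variables (n t : nat) (F : cnf n).

Definition mono2_closure : cnf n :=
  [set C : clause n | [&& #|C| <= 2, [forall l in C, l.2] &
                          [forall a in sat_t t F, clause_sat a C]]].

Lemma mono2_closure_kcnf : is_kcnf 2 mono2_closure.
Proof. by apply/forallP => C; apply/implyP; rewrite inE => /and3P []. Qed.

Lemma mono2_closure_monotone : monotone mono2_closure.
Proof. by apply/forallP => C; apply/implyP; rewrite inE => /and3P []. Qed.

Lemma sat_t_mono2_closure : sat_t t F \subset sat_t t mono2_closure.
Proof.
apply/subsetP => a aF; move: (aF); rewrite !inE => /andP [_ ->]; rewrite andbT.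
apply/forallP => C; apply/implyP; rewrite inE => /and3P [_ _ /forallP /(_ a)].
by rewrite aF.
Qed.

Lemma mono2_closure_pair_zero (s : assignment n) (i j : 'I_n) :
  satisfies s mono2_closure -> ~~ s i -> ~~ s j ->
  exists2 a, a \in sat_t t F & ~~ a i && ~~ a j.
Proof.
move=> /forallP sat si sj; pose C : clause n := [set (i, true); (j, true)].
have : C \notin mono2_closure.
  apply/negP => CF; have /existsP [l] := implyP (sat C) CF.
  rewrite !inE => /andP [/orP [] /eqP -> ];
  by rewrite /lit_val /= eqb_id ?(negbTE si) ?(negbTE sj).
rewrite inE cards2 ltnS leq_b1 /=.
have -> : [forall l in C, l.2 : bool].
  by apply/forallP => l; apply/implyP; rewrite !inE => /orP [] /eqP ->.
case/forallPn => a; rewrite negb_imply => /andP [aF aC].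
exists a => //; apply/andP; split; apply: contra aC => a1; apply/existsP.
- by exists (i, true); rewrite !inE eqxx /lit_val /= a1.
- by exists (j, true); rewrite !inE eqxx orbT /lit_val /= a1.
Qed.

Lemma mono2_closure_admissible :
  t <= n -> is_kcnf 2 F -> admissible t F -> admissible t mono2_closure.
Proof.
move=> tn F2 /forallP admF; apply/forallP => s; apply/implyP => sat.
rewrite leqNgt; apply/negP => light.
set Z := [set i | ~~ s i].
have Z0 : Z != set0.
  by apply: contraTneq light => /weight_full ->; rewrite -leqNgt.
have F_median a b c : satisfies a F -> satisfies b F -> satisfies c F ->
    satisfies (median a b c) F by exact: satisfies_median.
have [i j|b satb b0] := median_common_zero F_median _ Z0.
  rewrite !inE => si sj.
  have [a aF aij] := mono2_closure_pair_zero sat si sj.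
  by exists a => //; move: aF; rewrite inE => /andP [].
have := implyP (admF b) satb.
by rewrite leqNgt (leq_ltn_trans (weight_le_zeros b0) light).
Qed.

End MonotoneClosure.

Lemma sat_t_le_S n t k (F : cnf n) :
  is_kcnf k F -> admissible t F -> #|sat_t t F| <= S n t k.
Proof. by move=> Fk Ft; apply: (leq_bigmax_cond F); rewrite Fk Ft. Qed.

Lemma sat_t_le_Splus n t k (F : cnf n) :
  is_kcnf k F -> monotone F -> admissible t F -> #|sat_t t F| <= Splus n t k.
Proof. by move=> Fk Fm Ft; apply: (leq_bigmax_cond F); rewrite Fk Fm Ft. Qed.

Lemma Splus_le_S n t k : Splus n t k <= S n t k.
Proof. by apply/bigmax_leqP => F /and3P [Fk _ Ft]; apply: sat_t_le_S. Qed.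

Lemma S_attained n t k :
  exists2 F : cnf n, is_kcnf k F && admissible t F & #|sat_t t F| = S n t k.
Proof.
pose bot : cnf n := [set set0].
have bot_ok : is_kcnf k bot && admissible t bot.
  apply/andP; split; apply/forallP.
    by move=> C; apply/implyP; rewrite inE => /eqP ->; rewrite cards0.
  move=> a; apply/implyP => /forallP /(_ set0); rewrite inE eqxx /=.
  by case/existsP => l; rewrite inE.
have [|F0 F0ok F0max] := eq_bigmax_cond (fun F : cnf n => #|sat_t t F|)
  (A := [pred F : cnf n | is_kcnf k F && admissible t F]).
  by apply/card_gt0P; exists bot.
by exists F0; rewrite // -F0max; apply: eq_bigl => F; rewrite inE.
Qed.

Theorem lemma4 (n t : nat) : t <= n ->
  (exists F : cnf n,
     [/\ is_kcnf 2 F, monotone F, acyclic F, admissible t F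
       & #|sat_t t F| = S n t 2])
  /\ Splus n t 2 = S n t 2.
Proof.
move=> tn.
have closure_ok (F : cnf n) : is_kcnf 2 F -> admissible t F ->
    [/\ is_kcnf 2 (mono2_closure t F), monotone (mono2_closure t F),
        admissible t (mono2_closure t F)
      & #|sat_t t F| <= #|sat_t t (mono2_closure t F)|].
  move=> F2 Ft; split; first exact: mono2_closure_kcnf.
  - exact: mono2_closure_monotone.
  - exact: mono2_closure_admissible.
  - exact/subset_leq_card/sat_t_mono2_closure.
have S_le_Splus : S n t 2 <= Splus n t 2.
  apply/bigmax_leqP => F /andP [F2 Ft].
  have [C2 Cm Ct le] := closure_ok F F2 Ft.
  exact: leq_trans le (sat_t_le_Splus C2 Cm Ct).
split; last by apply/eqP; rewrite eqn_leq Splus_le_S S_le_Splus.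
have [F0 /andP [F02 F0t] F0max] := S_attained n t 2.
have [C2 Cm Ct le] := closure_ok F0 F02 F0t.
exists (mono2_closure t F0); split => //; first exact: monotone_acyclic.
by apply/eqP; rewrite eqn_leq sat_t_le_S //= -F0max.
Qed.
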